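(* Suppose the following statement (Conjecture 1) holds: every $D(4)$-triple $\{a,b,c\}$ has a unique extension to a $D(4)$-quadruple $\{a,b,c,d\}$ with $d>\max\{a,b,c\}$. Then the following statement (Conjecture 2) holds: if $\{a_1,b,c,d\}$ is a $D(4)$-quadruple with $a_1<b<c<d$, then $\{a_2,b,c,d\}$ is not a $D(4)$-quadruple for any positive integer $a_2$ with $a_2\neq a_1$ and $a_2<b$.
   Context: A $D(4)$-$m$-tuple is a set of $m$ distinct positive integers such that the product of any two distinct elements increased by $4$ is a perfect square ($m=3$: triple, $m=4$: quadruple). *)

From Stdlib Require Import Arith.

Definition is_square (n : nat) : Prop := exists k : nat, k * k = n.

Definition D4_pair (x y : nat) : Prop := is_square (x * y + 4).

Definition D4_triple (a b c : nat) : Prop :=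
  0 < a /\ 0 < b /\ 0 < c /\
  a <> b /\ a <> c /\ b <> c /\
  D4_pair a b /\ D4_pair a c /\ D4_pair b c.

Definition D4_quadruple (a b c d : nat) : Prop :=
  0 < a /\ 0 < b /\ 0 < c /\ 0 < d /\
  a <> b /\ a <> c /\ a <> d /\ b <> c /\ b <> d /\ c <> d /\
  D4_pair a b /\ D4_pair a c /\ D4_pair a d /\
  D4_pair b c /\ D4_pair b d /\ D4_pair c d.

Definition Conjecture1 : Prop :=
  forall a b c : nat, D4_triple a b c ->
    exists d : nat, Nat.max a (Nat.max b c) < d /\ D4_quadruple a b c d /\
      forall d' : nat, Nat.max a (Nat.max b c) < d' -> D4_quadruple a b c d' -> d' = d.

Definition Conjecture2 : Prop :=
  forall a1 b c d : nat, D4_quadruple a1 b c d -> a1 < b -> b < c -> c < d ->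
    forall a2 : nat, 0 < a2 -> a2 <> a1 -> a2 < b -> ~ D4_quadruple a2 b c d.

From Stdlib Require Import Arith ZArith Lia.

(* For a D(4)-triple {a,b,c} with ab+4 = r^2, ac+4 = s^2,
   bc+4 = t^2 the number
       d+ = a + b + c + (abc + rst)/2
   is an integer larger than a, b, c, and {a,b,c,d+} is a D(4)-quadruple (the
   "regular" extension): e.g. (au + pq)^2 = 4(ad+ + 4) for the corresponding
   roots.  Moreover d+ satisfies the regularity relation
       (a + b - c - d)^2 = (ab + 4)(cd + 4).
   Under Conjecture 1 the unique extension with d > max{a,b,c} must be d+, so
   every quadruple whose largest element is d is regular.  If {a1,b,c,d} and
   {a2,b,c,d} are both regular, subtracting the two regularity relations gives
   (a1 - a2)(a1 + a2 + 2b - 2c - 2d - b(cd + 4)) = 0, and the second factor is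
   negative when a1, a2 < b < c < d; hence a1 = a2, which is Conjecture 2. *)

Lemma even_root_of_square (x n : nat) : x * x = 4 * n -> exists m, x = 2 * m.
Proof.
  intros Hx. destruct (Nat.Even_or_Odd x) as [[m Hm] | [m Hm]].
  - exists m; exact Hm.
  - subst x. nia.
Qed.

Lemma regular_sum_even (a b c r s t : nat) :
  r * r = a * b + 4 -> s * s = a * c + 4 -> t * t = b * c + 4 ->
  exists k, a * b * c + r * s * t = 2 * k.
Proof.
  intros Hr Hs Ht.
  assert (Hsq : (r * s * t) * (r * s * t) = (a * b + 4) * (a * c + 4) * (b * c + 4)).
  { rewrite <- Hr, <- Hs, <- Ht. ring. }
  apply (f_equal Nat.even) in Hsq.
  rewrite !Nat.even_mul, !Nat.even_add, !Nat.even_mul in Hsq.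
  assert (Heven : Nat.even (a * b * c + r * s * t) = true).
  { rewrite Nat.even_add, !Nat.even_mul.
    destruct (Nat.even r), (Nat.even s), (Nat.even t),
             (Nat.even a), (Nat.even b), (Nat.even c); simpl in *; congruence. }
  apply Nat.even_spec in Heven. destruct Heven as [k Hk]. exists k. exact Hk.
Qed.

(* The regular extension d+ of a triple {x,y,z} makes x d+ + 4 a square,
   because (xu + pq)^2 = 4 (x d+ + 4). *)
Lemma regular_extension_pair (x y z p q u d : nat) :
  p * p = x * y + 4 -> q * q = x * z + 4 -> u * u = y * z + 4 ->
  2 * d = 2 * x + 2 * y + 2 * z + x * y * z + p * q * u ->
  D4_pair x d.
Proof.
  intros Hp Hq Hu Hd.
  assert (Hsq : (x * u + p * q) * (x * u + p * q) = 4 * (x * d + 4)) by nia.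
  destruct (even_root_of_square _ _ Hsq) as [m Hm].
  exists m. rewrite Hm in Hsq. nia.
Qed.

Definition regular (a b c d : Z) : Prop :=
  ((a + b - c - d) * (a + b - c - d) = (a * b + 4) * (c * d + 4))%Z.

Lemma regular_extension_is_regular (a b c d r s t : Z) :
  (r * r = a * b + 4 -> s * s = a * c + 4 -> t * t = b * c + 4 ->
   2 * d = 2 * a + 2 * b + 2 * c + a * b * c + r * s * t ->
   regular a b c d)%Z.
Proof.
  intros Hr Hs Ht Hd. unfold regular.
  enough (H4 : (4 * ((a + b - c - d) * (a + b - c - d))
               = 4 * ((a * b + 4) * (c * d + 4)))%Z) by lia.
  assert (Hdiff : (2 * (a + b - c - d) = -(4 * c + a * b * c + r * s * t))%Z) by lia.
  replace (4 * ((a + b - c - d) * (a + b - c - d)))%Z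
    with ((2 * (a + b - c - d)) * (2 * (a + b - c - d)))%Z by ring.
  replace (4 * ((a * b + 4) * (c * d + 4)))%Z
    with (2 * c * (a * b + 4) * (2 * d) + 16 * (a * b + 4))%Z by ring.
  rewrite Hdiff, Hd, <- Hr.
  replace ((-(4 * c + a * b * c + r * s * t)) * (-(4 * c + a * b * c + r * s * t)))%Z
    with (16 * c * c + a * b * c * a * b * c + (r * r) * (s * s) * (t * t)
          + 8 * a * b * c * c + 2 * c * r * s * t * (4 + a * b))%Z by ring.
  rewrite Hr, Hs, Ht. ring.
Qed.

Lemma regular_extension_exists (a b c : nat) :
  D4_triple a b c ->
  exists d, Nat.max a (Nat.max b c) < d /\ D4_quadruple a b c d /\
            regular (Z.of_nat a) (Z.of_nat b) (Z.of_nat c) (Z.of_nat d).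
Proof.
  intros (Ha & Hb & Hc & Nab & Nac & Nbc & [r Hr] & [s Hs] & [t Ht]).
  destruct (regular_sum_even a b c r s t Hr Hs Ht) as [k Hk].
  assert (Hk_pos : 0 < k) by nia.
  exists (a + b + c + k).
  assert (Hd : 2 * (a + b + c + k) = 2 * a + 2 * b + 2 * c + a * b * c + r * s * t)
    by lia.
  split; [lia |]. split.
  - unfold D4_quadruple.
    repeat split; try lia; try (eexists; eassumption).
    + apply (regular_extension_pair a b c r s t); assumption.
    + apply (regular_extension_pair b a c r t s); [lia | lia | lia | nia].
    + apply (regular_extension_pair c a b s t r); [lia | lia | lia | nia].
  - apply (regular_extension_is_regular _ _ _ _ (Z.of_nat r) (Z.of_nat s) (Z.of_nat t));
      lia.
Qed.

(* Under Conjecture 1, every D(4)-quadruple whose last element is the largest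
   is the regular extension of the other three, hence regular. *)
Lemma conjecture1_forces_regular (a b c d : nat) :
  Conjecture1 -> D4_quadruple a b c d -> Nat.max a (Nat.max b c) < d ->
  regular (Z.of_nat a) (Z.of_nat b) (Z.of_nat c) (Z.of_nat d).
Proof.
  intros C1 Q Hmax.
  assert (T : D4_triple a b c).
  { destruct Q as (Ha & Hb & Hc & _ & Nab & Nac & _ & Nbc & _ & _ & Pab & Pac & _ & Pbc & _).
    repeat split; assumption. }
  destruct (C1 a b c T) as [d0 [_ [_ Huniq]]].
  destruct (regular_extension_exists a b c T) as [dp [Hdp_max [Qdp Hreg]]].
  replace d with dp; [exact Hreg |].
  rewrite (Huniq d Hmax Q). exact (Huniq dp Hdp_max Qdp).
Qed.

(* Two regular quadruples sharing b < c < d whose first entries are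
   nonnegative and below b have the same first entry: the difference of the
   regularity relations factors as (a1 - a2)(a1 + a2 + 2b - 2c - 2d - b(cd+4)). *)
Lemma regular_first_entry_unique (a1 a2 b c d : Z) :
  (0 <= a1 -> 0 <= a2 -> a1 < b -> a2 < b -> b < c -> c < d ->
   regular a1 b c d -> regular a2 b c d -> a1 = a2)%Z.
Proof.
  unfold regular. intros Ha1 Ha2 H1 H2 Hbc Hcd E1 E2.
  assert (F : ((a1 - a2) * (a1 + a2 + 2 * b - 2 * c - 2 * d - b * (c * d + 4)) = 0)%Z).
  { transitivity (((a1 + b - c - d) * (a1 + b - c - d) - (a1 * b + 4) * (c * d + 4))
                - ((a2 + b - c - d) * (a2 + b - c - d) - (a2 * b + 4) * (c * d + 4)))%Z;
      [ring | rewrite E1, E2; ring]. }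
  assert (Hpos : (0 <= b * (c * d + 4))%Z)
    by (apply Z.mul_nonneg_nonneg; [lia | nia]).
  apply Z.mul_eq_0 in F. destruct F as [F | F]; lia.
Qed.

Theorem mainTheorem5 : Conjecture1 -> Conjecture2.
Proof.
  intros C1 a1 b c d Q1 H1 Hbc Hcd a2 Ha2 Hne Ha2b Q2.
  apply Hne. apply Nat2Z.inj.
  apply (regular_first_entry_unique _ _ (Z.of_nat b) (Z.of_nat c) (Z.of_nat d));
    try lia.
  - apply conjecture1_forces_regular; [assumption | assumption | lia].
  - apply conjecture1_forces_regular; [assumption | assumption | lia].
Qed.
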